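(* For integers $n\ge1$ and $q\ge2$, $$\mathbb E_{{\boldsymbol y}\in\Sigma_q^{n-1}}\big[\mathsf{H}^{\mathsf{In}}_{1\text{-}\mathsf{Del}}({\boldsymbol y})\big]=\log_2(nq)-\frac{\sum_{r=1}^{n-1}N_{n-1,r,q}\,(r+1)\log_2(r+1)}{nq^n},$$ $$\mathbb E_{{\boldsymbol y}\in\Sigma_q^{n+1}}\big[\mathsf{H}^{\mathsf{In}}_{1\text{-}\mathsf{Ins}}({\boldsymbol y})\big]=\log_2(n+1)-\frac{\sum_{r=1}^{n+1}N_{n+1,r,q}\,r\log_2 r}{(n+1)q^{n+1}},$$ where the expectations are over ${\boldsymbol y}$ uniformly distributed on the indicated sets.
   Context: $\Sigma_q=\{0,\dots,q-1\}$. For sequences ${\boldsymbol u}$ of length $\ell$ and ${\boldsymbol v}$ of length $N\ge\ell$, $\omega_{{\boldsymbol u}}({\boldsymbol v})$ is the number of index tuples $1\le i_1<\dots<i_\ell\le N$ with $v_{i_j}=u_j$. The $1$-deletion channel with input length $n$ maps ${\boldsymbol x}\in\Sigma_q^n$ to ${\boldsymbol y}\in\Sigma_q^{n-1}$ with probability $\omega_{{\boldsymbol y}}({\boldsymbol x})/n$; the $1$-insertion channel with input length $n$ maps ${\boldsymbol x}\in\Sigma_q^n$ to ${\boldsymbol y}\in\Sigma_q^{n+1}$ with probability $\omega_{{\boldsymbol x}}({\boldsymbol y})/((n+1)q)$. Under uniform transmission ($X$ uniform on $\Sigma_q^n$), the input entropy of an output ${\boldsymbol y}$ is $H(X\mid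 Y={\boldsymbol y})$ in bits, with posterior $P({\boldsymbol x}\mid {\boldsymbol y})=\Pr\{{\boldsymbol y}\mid{\boldsymbol x}\}/\sum_{{\boldsymbol x}'}\Pr\{{\boldsymbol y}\mid{\boldsymbol x}'\}$; these are denoted $\mathsf{H}^{\mathsf{In}}_{1\text{-}\mathsf{Del}}({\boldsymbol y})$ and $\mathsf{H}^{\mathsf{In}}_{1\text{-}\mathsf{Ins}}({\boldsymbol y})$ respectively. A run is a maximal block of identical consecutive symbols, and $N_{\ell,r,q}$ denotes the total number of runs of length exactly $r$ counted over all sequences in $\Sigma_q^{\ell}$. *)

From HB Require Import structures.
From mathcomp Require Import all_boot all_order all_algebra.
From mathcomp Require Import reals exp.
Set Implicit Arguments. Unset Strict Implicit. Unset Printing Implicit Defensive.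
Import Order.TTheory GRing.Theory Num.Theory.
Local Open Scope ring_scope.

(* Sigma_q^l is represented by l.-tuple 'I_q. *)

(* omega_u(v): number of index tuples i_1 < ... < i_l (0-based here) with
   v_{i_j} = u_j, i.e. strictly increasing maps f : 'I_l -> 'I_N with
   v (f j) = u j. *)
Definition omega (q l N : nat) (u : l.-tuple 'I_q) (v : N.-tuple 'I_q) : nat :=
  #|[set f : {ffun 'I_l -> 'I_N} |
      [forall j : 'I_l, forall k : 'I_l, (j < k)%N ==> (f j < f k)%N] &&
      [forall j : 'I_l, tnth v (f j) == tnth u j]]|.

Section Channels.
Variable R : realType.

Definition log2 (x : R) : R := ln x / ln 2.

(* 1-deletion channel, input length n, output length m (= n-1):
   Pr{y | x} = omega_y(x) / n. *)
Definition del_prob (q n m : nat) (x : n.-tuple 'I_q) (y : m.-tuple 'I_q) : R :=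
  (omega y x)%:R / n%:R.

(* 1-insertion channel, input length n, output length m (= n+1):
   Pr{y | x} = omega_x(y) / ((n+1) q). *)
Definition ins_prob (q n m : nat) (x : n.-tuple 'I_q) (y : m.-tuple 'I_q) : R :=
  (omega x y)%:R / ((n.+1)%:R * q%:R).

(* Posterior under uniform input X on Sigma_q^n. *)
Definition posterior (q n m : nat) (ch : n.-tuple 'I_q -> m.-tuple 'I_q -> R)
  (y : m.-tuple 'I_q) (x : n.-tuple 'I_q) : R :=
  ch x y / \sum_(x' : n.-tuple 'I_q) ch x' y.

Definition entropy_bits (T : finType) (P : T -> R) : R :=
  - \sum_(t : T) (if P t == 0 then 0 else P t * log2 (P t)).

Definition H_in (q n m : nat) (ch : n.-tuple 'I_q -> m.-tuple 'I_q -> R)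
  (y : m.-tuple 'I_q) : R :=
  entropy_bits (posterior ch y).

Definition H_in_del (q n : nat) (y : n.-1.-tuple 'I_q) : R :=
  H_in (@del_prob q n n.-1) y.

Definition H_in_ins (q n : nat) (y : n.+1.-tuple 'I_q) : R :=
  H_in (@ins_prob q n n.+1) y.

Definition unif_exp (q m : nat) (F : m.-tuple 'I_q -> R) : R :=
  (\sum_(y : m.-tuple 'I_q) F y) / (q ^ m)%:R.

End Channels.

(* Number of runs of length exactly r in s : a run is a maximal block of
   identical consecutive symbols; it is identified by its start position i. *)
Definition nruns (q l r : nat) (s : l.-tuple 'I_q) : nat :=
  #|[set i : 'I_l |
      let d := tnth s i in
      [&& (0 < r)%N, (i + r <= l)%N,
          all (fun k => nth d s k == nth d s i) (iota i r),
          (i == 0%N :> nat) || (nth d s i.-1 != nth d s i) &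
          (i + r == l)%N || (nth d s (i + r) != nth d s i)]]|.

Definition Nruns (l r q : nat) : nat := \sum_(s : l.-tuple 'I_q) nruns r s.

From HB Require Import structures.
From mathcomp Require Import all_boot all_order all_algebra zify.
From mathcomp Require Import reals exp.
Import Order.TTheory GRing.Theory Num.Theory.

(* An increasing embedding of a word of length m into a word v of length m + 1
   skips exactly one position, so omega u v counts the positions of v whose
   deletion yields u.  Deleting two positions of v gives the same word iff both
   lie in one run of v; hence, as u ranges over all words, the nonzero values of
   omega u v are the run lengths of v, one for each run.
   Both posteriors are proportional to such counts, and a distribution
   proportional to integer weights w of total S has entropy
   log S - (sum w log w) / S.  For insertion the weights omega x y have total
   n + 1 and give the run-length sum of y.  For deletion the weights omega y x
   have total n q; summing over y first gives the run-length sums of all x of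
   length n, and removing one symbol from runs of length r + 1 >= 2 gives
   N_{n,r+1,q} = N_{n-1,r,q}. *)

Set Implicit Arguments.
Unset Strict Implicit.
Unset Printing Implicit Defensive.

Section DeleteInsert.
Variable T : finType.

Definition tdelete m (k : 'I_m.+1) (s : m.+1.-tuple T) : m.-tuple T :=
  [tuple tnth s (lift k j) | j < m].

Definition tinsert m (k : 'I_m.+1) (a : T) (s : m.-tuple T) : m.+1.-tuple T :=
  [tuple if unlift k j is Some j' then tnth s j' else a | j < m.+1].

Lemma tinsertK m (k : 'I_m.+1) a : cancel (tinsert k a) (tdelete k).
Proof. by move=> s; apply: eq_from_tnth => j; rewrite !tnth_mktuple liftK. Qed.

Lemma tdeleteK m (k : 'I_m.+1) (s : m.+1.-tuple T) :
  tinsert k (tnth s k) (tdelete k s) = s.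
Proof.
apply: eq_from_tnth => j; rewrite !tnth_mktuple.
by case: unliftP => [j'|] ->; rewrite ?tnth_mktuple.
Qed.

Lemma tnth_tinsert m (k : 'I_m.+1) a (s : m.-tuple T) : tnth (tinsert k a s) k = a.
Proof. by rewrite tnth_mktuple unlift_none. Qed.

Lemma nth_tdelete x0 m (k : 'I_m.+1) (s : m.+1.-tuple T) j :
  nth x0 (tdelete k s) j = nth x0 s (bump k j).
Proof.
have [jm|mj] := ltnP j m; last first.
  by rewrite !nth_default ?size_tuple //; rewrite /bump; have := ltn_ord k; lia.
by rewrite -[j]/(val (Ordinal jm)) -tnth_nth tnth_mktuple (tnth_nth x0).
Qed.

Lemma card_tdelete_preim m (k : 'I_m.+1) (s : m.-tuple T) :
  #|[set t | tdelete k t == s]| = #|T|.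
Proof.
have -> : [set t | tdelete k t == s] = (tinsert k ^~ s) @: setT.
  apply/setP => t; rewrite inE; apply/eqP/imsetP => [<-|[a _ ->]].
    by exists (tnth t k); rewrite ?tdeleteK.
  exact: tinsertK.
rewrite card_imset ?cardsT // => a b /(congr1 (fun t => tnth t k)).
by rewrite !tnth_tinsert.
Qed.

End DeleteInsert.

Lemma lift_increasing n (k : 'I_n.+1) : {homo lift k : i j / i < j}.
Proof. by move=> i j /=; rewrite /bump; lia. Qed.

Lemma increasing_lift m (f : 'I_m -> 'I_m.+1) :
  {homo f : i j / i < j} -> exists k : 'I_m.+1, f =1 lift k.
Proof.
move=> f_inc.
(* f misses exactly one value k, and f and lift k both enumerate its complement
   increasingly. *)
have f_inj : injective f.
  by move=> i j fij; apply/val_inj/eqP; case: ltngtP => // /f_inc; rewrite fij ltnn.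
have : #|~: [set x in codom f]| == 1.
  by have := cardsC [set x in codom f]; rewrite cardsE card_codom // !card_ord; lia.
case/cards1P => k missing_k; exists k.
have mem_codom x : (x \in codom f) = (x != k).
  by have /setP/(_ x) := missing_k; rewrite !inE => <-; rewrite negbK.
pose lt_val := relpre (@nat_of_ord m.+1) ltn.
have sorted_enum : sorted (relpre (@nat_of_ord m) ltn) (enum 'I_m).
  by rewrite -sorted_map val_enum_ord iota_ltn_sorted.
suff /eq_in_map eq_f : map f (enum 'I_m) = map (lift k) (enum 'I_m).
  by move=> j; apply: eq_f; rewrite mem_enum.
apply: (@irr_sorted_eq _ lt_val).
- by move=> ? ? ?; apply: ltn_trans.
- by move=> ?; apply: ltnn.
- exact: (@homo_sorted _ _ f _ lt_val f_inc _ sorted_enum).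
- exact: (@homo_sorted _ _ (lift k) _ lt_val (@lift_increasing m k) _ sorted_enum).
move=> x; rewrite -codomE mem_codom; apply/idP/mapP => [|[j _ ->]].
  by rewrite eq_sym => /unlift_some[j -> _]; exists j; rewrite ?mem_enum.
by rewrite eq_sym neq_lift.
Qed.

Lemma lift_ffun_inj m : injective (fun k : 'I_m.+1 => [ffun j => lift k j]).
Proof.
move=> k k' /ffunP eq_lift; apply/eqP/negPn/negP; rewrite eq_sym => /unlift_some[j ek _].
by have := eq_lift j; rewrite !ffunE -ek => /eqP; rewrite lift_eqF.
Qed.

Lemma omega_tdelete q m (u : m.-tuple 'I_q) (v : m.+1.-tuple 'I_q) :
  omega u v = #|[set k : 'I_m.+1 | tdelete k v == u]|.
Proof.
rewrite /omega -(card_imset _ (@lift_ffun_inj m)); congr #|pred_of_set _|.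
apply/setP => f; rewrite !inE; apply/andP/imsetP => [[/forallP f_inc /forallP f_v]|].
  have [|k fk] := @increasing_lift m f.
    by move=> i j ij; have /forallP/(_ j)/implyP := f_inc i; apply.
  exists k; last by apply/ffunP => j; rewrite ffunE fk.
  by rewrite inE; apply/eqP/eq_from_tnth => j; rewrite tnth_mktuple -fk; apply/eqP.
case=> k; rewrite inE => /eqP <- ->; split.
  by apply/forallP => i; apply/forallP => j; rewrite !ffunE; apply/implyP/lift_increasing.
by apply/forallP => j; rewrite !ffunE tnth_mktuple.
Qed.

Section Runs.
Variables (T : eqType) (z : nat -> T).

Definition is_run (l i r : nat) : bool :=
  [&& 0 < r, i + r <= l, all (fun k => z k == z i) (iota i r),
      (i == 0) || (z i.-1 != z i) & (i + r == l) || (z (i + r) != z i)].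

Lemma is_runP l i r : reflect
  [/\ 0 < r, i + r <= l, (forall j, i <= j < i + r -> z j = z i),
      i = 0 \/ z i.-1 <> z i & i + r = l \/ z (i + r) <> z i]
  (is_run l i r).
Proof.
apply: (iffP and5P) => [[r_gt0 irl /allP in_run left_end right_end]|].
  split=> //; first by move=> j hj; apply/eqP/in_run; rewrite mem_iota.
    by case/orP: left_end => /eqP; [left|right].
  by case/orP: right_end => /eqP; [left|right].
case=> r_gt0 irl in_run left_end right_end; split=> //.
- by apply/allP => j; rewrite mem_iota => /in_run ->.
- by case: left_end => [->|/eqP ->]; rewrite ?orbT.
- by case: right_end => [->|/eqP ->]; rewrite ?eqxx ?orbT.
Qed.

Definition const_on (a b : nat) : bool :=
  all (fun j => z j == z j.+1) (index_iota a b).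

Lemma const_onP a b :
  reflect (forall j, a <= j < b -> z j = z j.+1) (const_on a b).
Proof.
apply: (iffP allP) => steps j; rewrite ?mem_index_iota => hj; last exact/eqP/steps.
by apply/eqP/steps; rewrite mem_index_iota.
Qed.

Lemma const_on_eq a b : const_on a b -> forall j, a <= j <= b -> z j = z a.
Proof.
move/const_onP => steps; elim=> [|j IHj] hj; first by congr z; lia.
by have [->//|ne] := eqVneq a j.+1; rewrite -steps ?IHj //; lia.
Qed.

Lemma const_on_cat a b c :
  a <= b <= c -> const_on a b -> const_on b c -> const_on a c.
Proof.
move=> abc /const_onP ab /const_onP bc; apply/const_onP => j hj.
by have [jb|bj] := ltnP j b; [apply: ab | apply: bc]; lia.
Qed.

Lemma const_onxx a : const_on a a.
Proof. by rewrite /const_on /index_iota subnn. Qed.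

Lemma const_on1 a : const_on a a.+1 = (z a == z a.+1).
Proof. by rewrite /const_on /index_iota subSnn /= andbT. Qed.

Lemma run_start k : exists2 i, i <= k &
  const_on i k && ((i == 0) || (z i.-1 != z i)).
Proof.
elim: k => [|k [i ik /andP[ik_const i_start]]]; first by exists 0.
have [step|ne] := eqVneq (z k) (z k.+1); last first.
  by exists k.+1; rewrite ?const_onxx ?ne ?orbT.
exists i; rewrite ?i_start ?andbT; first lia.
by apply: (const_on_cat _ ik_const); rewrite ?const_on1 ?step //; lia.
Qed.

Lemma run_end l k : k < l -> exists2 e, k <= e < l &
  const_on k e && ((e.+1 == l) || (z e.+1 != z e)).
Proof.
move=> kl; have [d ld] : exists d, l = k + d.+1 by exists (l - k).-1; lia.
elim: d k {kl} ld => [|d IHd] k ld.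
  by exists k; [lia | rewrite const_onxx ld addn1 eqxx].
have [|e ke /andP[ke_const e_end]] := IHd k.+1; first lia.
have [step|ne] := eqVneq (z k) (z k.+1); last first.
  by exists k; [lia | rewrite const_onxx (eq_sym (z k.+1)) ne orbT].
exists e; rewrite ?e_end ?andbT; first lia.
by apply: (const_on_cat _ _ ke_const); rewrite ?const_on1 ?step //; lia.
Qed.

Lemma run_exists l k : k < l -> exists i r, is_run l i r && (i <= k < i + r).
Proof.
move=> kl; have [i ik /andP[ik_const i_start]] := run_start k.
have [e /andP[ke el] /andP[ke_const e_end]] := run_end kl.
have ie_const : forall j, i <= j <= e -> z j = z i.
  by apply: const_on_eq; apply: (const_on_cat _ ik_const ke_const); lia.
exists i, (e.+1 - i); apply/andP; split; last lia.
apply/and5P; split; rewrite ?i_start //; try lia.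
  by apply/allP => j; rewrite mem_iota => hj; apply/eqP/ie_const; lia.
by rewrite subnKC -?(ie_const e) //; lia.
Qed.

Lemma run_class l i r k k' : is_run l i r -> i <= k < i + r -> k' < l ->
  const_on (minn k k') (maxn k k') = (i <= k' < i + r).
Proof.
case/is_runP=> r_gt0 irl in_run left_end right_end hk hk'.
apply/const_onP/idP => [steps|hk'_run j hj]; last by rewrite !in_run //; lia.
have [k'i|ik' /=] := ltnP k' i.
  case: left_end => [|ne]; first lia.
  by exfalso; apply: ne; rewrite steps prednK //; lia.
have [//|k'_out] := ltnP k' (i + r).
case: right_end => [|ne]; first lia.
exfalso; apply: ne; have -> : i + r = (i + r).-1.+1 by lia.
by rewrite -steps ?in_run //; lia.
Qed.

Lemma run_unique l i r i' r' k : is_run l i r -> is_run l i' r' ->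
  i <= k < i + r -> i' <= k < i' + r' -> (i, r) = (i', r').
Proof.
move=> run run' hk hk'.
have /is_runP[r_gt0 irl _ _ _] := run.
have /is_runP[r'_gt0 irl' _ _ _] := run'.
have same x : x < l -> (i <= x < i + r) = (i' <= x < i' + r').
  by move=> xl; rewrite -(run_class run hk xl) (run_class run' hk' xl).
have := same i; have := same i'; have := same (i + r).-1; have := same (i' + r').-1.
move=> e1 e2 e3 e4; congr (_, _); lia.
Qed.

End Runs.

Lemma bump_ge h i : h <= i -> bump h i = i.+1.
Proof. by rewrite /bump => ->. Qed.

Lemma bump_lt h i : i < h -> bump h i = i.
Proof. by rewrite /bump; case: leqP. Qed.

Lemma tdelete_eq (T : finType) x0 m (s : m.+1.-tuple T) (a b : 'I_m.+1) :
  (tdelete a s == tdelete b s) = const_on (nth x0 s) (minn a b) (maxn a b).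
Proof.
wlog ab : a b / a <= b.
  move=> sym; case/orP: (leq_total a b) => [|ba]; first exact: sym.
  by rewrite eq_sym minnC maxnC; apply: sym.
rewrite (minn_idPl ab) (maxn_idPr ab).
apply/eqP/const_onP => [eq_del j /andP[aj jb]|steps].
  have := congr1 (fun t : m.-tuple T => nth x0 t j) eq_del.
  by rewrite /= !nth_tdelete bump_ge // bump_lt // => ->.
apply/val_inj/(@eq_from_nth _ x0); rewrite ?size_tuple // => j _.
rewrite !nth_tdelete; have [ja|aj] := ltnP j a; first by rewrite !bump_lt //; lia.
have [jb|bj] := ltnP j b; last by rewrite !bump_ge //; lia.
by rewrite bump_ge // bump_lt // (steps j) // aj jb.
Qed.

Lemma card_ord_interval L i r : i + r <= L -> #|[set k : 'I_L | i <= k < i + r]| = r.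
Proof.
move=> irL; rewrite -sum1dep_card -(big_mkord (fun k => i <= k < i + r) (fun=> 1%N)).
transitivity (\sum_(i <= k < i + r) 1)%N; last by rewrite sum_nat_const_nat muln1 addKn.
by rewrite (big_nat_widenl i 0) // (big_nat_widen 0 (i + r) L).
Qed.

Lemma card_tdelete_class (T : finType) x0 m (s : m.+1.-tuple T) (k : 'I_m.+1) i r :
  is_run (nth x0 s) m.+1 i r -> i <= k < i + r ->
  #|[set k' | tdelete k' s == tdelete k s]| = r.
Proof.
move=> run hk; have /is_runP[_ irl _ _ _] := run.
rewrite -[RHS](card_ord_interval irl); apply: eq_card => k'.
by rewrite !inE (tdelete_eq x0) minnC maxnC (run_class run hk (ltn_ord k')).
Qed.

Section Classes.
Local Open Scope ring_scope.

Lemma sum_tdelete_classes (R : pzRingType) (T : finType) x0 m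
    (s : m.+1.-tuple T) (g : nat -> R) :
  \sum_(k : 'I_m.+1) g #|[set k' | tdelete k' s == tdelete k s]|
  = \sum_(1 <= r < m.+2)
      #|[set i : 'I_m.+1 | is_run (nth x0 s) m.+1 i r]|%:R * r%:R * g r.
Proof.
set z := nth x0 s.
pose through k (p : 'I_m.+1 * 'I_m.+2) := is_run z m.+1 p.1 p.2 && (p.1 <= k < p.1 + p.2)%N.
have class_sum k : g #|[set k' | tdelete k' s == tdelete k s]|
    = \sum_(p | through k p) g p.2.
  have [i [r /andP[run hk]]] := run_exists z (ltn_ord k).
  have /is_runP[_ irl _ _ _] := run.
  have [i_lt r_lt] : (i < m.+1)%N /\ (r < m.+2)%N by lia.
  rewrite (big_pred1 (Ordinal i_lt, Ordinal r_lt)) /=; last first.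
    move=> [i' r']; apply/idP/eqP => [/andP[run' hk'] | [-> ->]]; last exact/andP.
    by case: (run_unique run' run hk' hk) => ei er; congr pair; apply: val_inj.
  by rewrite (card_tdelete_class run hk).
rewrite (eq_bigr _ (fun k _ => class_sum k)) (exchange_big_dep xpredT) //=.
transitivity (\sum_(p : 'I_m.+1 * 'I_m.+2 | is_run z m.+1 p.1 p.2) p.2%:R * g p.2).
  rewrite [RHS]big_mkcond; apply: eq_bigr => p _ /=.
  case: ifP => run_p; last by apply: big1 => k; rewrite /through run_p.
  have /is_runP[_ irl _ _ _] := run_p.
  rewrite (eq_bigl (fun k => k \in [set k : 'I_m.+1 | p.1 <= k < p.1 + p.2]%N)).
    by rewrite sumr_const card_ord_interval // mulr_natl.
  by move=> k; rewrite inE /through run_p.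
rewrite (eq_bigl (fun p : 'I_m.+1 * 'I_m.+2 => xpredT p.1 && is_run z m.+1 p.1 p.2)) //.
rewrite -(pair_big_dep (I:='I_m.+1) (J:='I_m.+2) xpredT (fun i r => is_run z m.+1 i r)
  (fun _ r => r%:R * g r)).
rewrite (exchange_big_dep xpredT) //= big_ord_recl big1 ?add0r; last first.
  by move=> i _; rewrite mul0r.
rewrite big_add1 big_mkord; apply: eq_bigr => r _.
rewrite lift0 (eq_bigl (fun i => i \in [set i : 'I_m.+1 | is_run z m.+1 i r.+1])).
  by rewrite sumr_const -mulrA [RHS]mulr_natl.
by move=> i; rewrite inE.
Qed.

End Classes.

Lemma eq_in_is_run (T : eqType) (z1 z2 : nat -> T) l i r :
  (forall j, j < l -> z1 j = z2 j) -> is_run z1 l i r = is_run z2 l i r.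
Proof.
move=> eq_z; rewrite /is_run; case: (posnP r) => [-> //|r_gt0] /=.
case: leqP => //= irl; congr [&& _, _ & _].
- by apply: eq_in_all => k; rewrite mem_iota => hk; rewrite !eq_z //; lia.
- by case: eqP => //= i_gt0; rewrite !eq_z //; lia.
- by case: eqP => //= ir_lt; rewrite !eq_z //; lia.
Qed.

Lemma nruns_is_run q l r (x0 : 'I_q) (s : l.-tuple 'I_q) :
  nruns r s = #|[set i : 'I_l | is_run (nth x0 s) l i r]|.
Proof.
apply: eq_card => i; rewrite !inE -/(is_run (nth (tnth s i) s) l i r).
by apply: eq_in_is_run => j jl; apply: set_nth_default; rewrite size_tuple.
Qed.

Lemma is_run_succ (T : eqType) (z : nat -> T) m i r : i < m -> 0 < r ->
  is_run z m.+1 i r.+1 = (z i == z i.+1) && is_run (fun j => z (bump i j)) m i r.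
Proof.
move=> im r_gt0; apply/is_runP/andP.
  case=> _ irl in_run left_end right_end.
  have zi : z i.+1 = z i by apply: in_run; lia.
  split; first by rewrite zi.
  apply/is_runP; split=> //; first lia.
  - by move=> j hj; rewrite !bump_ge ?zi ?in_run //; lia.
  - have [->|i_gt0] := posnP i; [by left | right].
    case: left_end => [|ne]; first lia.
    by rewrite bump_lt ?bump_ge ?zi //; lia.
  - case: right_end => [|ne]; [left; lia | right].
    by rewrite !bump_ge ?zi -?addnS //; lia.
case=> /eqP zi /is_runP[_ irl in_run left_end right_end].
have in_run' j : i <= j < i + r -> z j.+1 = z i.
  by move=> hj; have := in_run j hj; rewrite !bump_ge -?zi //; lia.
split=> //; first lia.
- move=> j hj; have [->//|ne] := eqVneq j i.
  by rewrite -(prednK (_ : 0 < j)) ?in_run' //; lia.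
- have [->|i_gt0] := posnP i; [by left | right].
  case: left_end => [|ne]; first lia.
  by move: ne; rewrite bump_lt ?bump_ge -?zi //; lia.
- case: right_end => [|ne]; [left; lia | right].
  by move: ne; rewrite !bump_ge -?zi ?addnS //; lia.
Qed.

Lemma Nruns_by_position q l r (x0 : 'I_q) :
  Nruns l r q = \sum_(i : 'I_l) #|[set s : l.-tuple 'I_q | is_run (nth x0 s) l i r]|.
Proof.
rewrite /Nruns; under eq_bigr do rewrite (nruns_is_run _ x0) -sum1dep_card.
rewrite (exchange_big_dep xpredT) //=.
by under eq_bigr do rewrite sum1dep_card.
Qed.

Lemma Nruns_succ q m r : 0 < q -> 0 < r -> Nruns m.+1 r.+1 q = Nruns m r q.
Proof.
move=> q_gt0 r_gt0; pose x0 : 'I_q := Ordinal q_gt0.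
(* No run of length r + 1 starts at the last position, and duplicating the
   symbol at position i turns the runs of length r starting at i into those of
   length r + 1. *)
rewrite !(Nruns_by_position _ _ x0) big_ord_recr /=.
have -> : #|[set s : m.+1.-tuple 'I_q | is_run (nth x0 s) m.+1 m r.+1]| = 0.
  by apply: eq_card0 => s; rewrite inE; apply/negbTE/is_runP => -[_ ? _ _ _]; lia.
rewrite addn0; apply: eq_bigr => i _.
set k : 'I_m.+1 := widen_ord (leqnSn m) i.
have dup_inj : injective (fun t : m.-tuple 'I_q => tinsert k (tnth t i) t).
  by move=> t1 t2 /(congr1 (tdelete k)); rewrite !tinsertK.
rewrite -(card_imset _ dup_inj); apply: eq_card => s; rewrite inE.
have nth_del t := nth_tdelete x0 k t.
apply/idP/imsetP.
  rewrite is_run_succ //; case/andP => /eqP dup run_i; exists (tdelete k s).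
    by rewrite inE (eq_in_is_run _ _ (fun j _ => nth_del s j)).
  have -> : tnth (tdelete k s) i = tnth s k.
    by rewrite !(tnth_nth x0) nth_del /= bump_ge ?dup.
  by rewrite tdeleteK.
case=> t; rewrite inE => run_t ->; rewrite is_run_succ //; apply/andP; split.
  rewrite -[i in nth _ _ i]/(val k) -tnth_nth tnth_tinsert.
  by rewrite -(bump_ge (leqnn i)) -nth_del tinsertK -tnth_nth.
by rewrite -(eq_in_is_run _ _ (fun j _ => nth_del _ j)) tinsertK.
Qed.

Lemma sum_card_fibers (A B : finType) (phi : A -> B) :
  \sum_(b : B) #|[set a | phi a == b]| = #|A|.
Proof.
rewrite -sum1_card (partition_big phi xpredT) //=; apply: eq_bigr => b _.
by rewrite -sum1dep_card.
Qed.

Lemma sum_omega_input q m (s : m.+1.-tuple 'I_q) :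
  \sum_(u : m.-tuple 'I_q) omega u s = m.+1.
Proof.
under eq_bigr do rewrite omega_tdelete.
by rewrite (sum_card_fibers (fun k : 'I_m.+1 => tdelete k s)) card_ord.
Qed.

Lemma sum_omega_output q m (u : m.-tuple 'I_q) :
  \sum_(s : m.+1.-tuple 'I_q) omega u s = m.+1 * q.
Proof.
under eq_bigr do rewrite omega_tdelete -sum1dep_card.
rewrite (exchange_big_dep xpredT) //=.
under eq_bigr do rewrite sum1dep_card card_tdelete_preim card_ord.
by rewrite sum_nat_const card_ord.
Qed.

Section WeightedSums.
Local Open Scope ring_scope.
Variable R : pzRingType.

Lemma sum_fibers (A B : finType) (phi : A -> B) (h : nat -> R) :
  \sum_(b : B) #|[set a | phi a == b]|%:R * h #|[set a | phi a == b]|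
  = \sum_(a : A) h #|[set a' | phi a' == phi a]|.
Proof.
rewrite [RHS](partition_big phi xpredT) //=; apply: eq_bigr => b _.
rewrite (eq_bigr (fun _ => h #|[set a | phi a == b]|)) => [|a /eqP-> //].
rewrite (eq_bigl (fun a => a \in [set a | phi a == b])) => [|a]; last by rewrite inE.
by rewrite sumr_const mulr_natl.
Qed.

Lemma sum_omega_runs q m (s : m.+1.-tuple 'I_q) (g : nat -> R) :
  \sum_(u : m.-tuple 'I_q) (omega u s)%:R * g (omega u s)
  = \sum_(1 <= r < m.+2) (nruns r s)%:R * r%:R * g r.
Proof.
have x0 := tnth s ord0.
under eq_bigr do rewrite omega_tdelete.
rewrite (sum_fibers (fun k : 'I_m.+1 => tdelete k s)) (sum_tdelete_classes x0).
by under eq_bigr do rewrite -(nruns_is_run _ x0).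
Qed.

Lemma sum_nruns_Nruns l a b (g : nat -> R) q :
  \sum_(s : l.-tuple 'I_q) \sum_(a <= r < b) (nruns r s)%:R * r%:R * g r
  = \sum_(a <= r < b) (Nruns l r q)%:R * r%:R * g r.
Proof.
rewrite exchange_big; apply: eq_bigr => r _.
by rewrite /Nruns natr_sum !mulr_suml.
Qed.

End WeightedSums.

Section Entropy.
Local Open Scope ring_scope.
Variable R : realType.

Lemma log2_1 : log2 (1 : R) = 0.
Proof. by rewrite /log2 ln1 mul0r. Qed.

Lemma log2_div (a b : R) : 0 < a -> 0 < b -> log2 (a / b) = log2 a - log2 b.
Proof.
by move=> a_gt0 b_gt0; rewrite /log2 lnM ?posrE ?invr_gt0 // lnV ?posrE // mulrBl.
Qed.

Lemma eq_entropy_bits (T : finType) (P1 P2 : T -> R) :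
  P1 =1 P2 -> entropy_bits P1 = entropy_bits P2.
Proof. by move=> eqP12; rewrite /entropy_bits; under eq_bigr do rewrite eqP12. Qed.

Lemma entropy_bits_nat (T : finType) (w : T -> nat) (S : nat) :
  (0 < S)%N -> (\sum_t w t)%N = S ->
  entropy_bits (fun t => (w t)%:R / S%:R : R)
  = log2 S%:R - (\sum_t (w t)%:R * log2 (w t)%:R) / S%:R.
Proof.
move=> S_gt0 sum_w; have S_pos : (0 : R) < S%:R by rewrite ltr0n.
rewrite /entropy_bits (eq_bigr (fun t =>
    (w t)%:R * log2 (w t)%:R / S%:R - (w t)%:R / S%:R * log2 S%:R)); last first.
  move=> t _; have [->|w_gt0] := posnP (w t); first by rewrite !mul0r eqxx subrr.
  rewrite mulf_eq0 invr_eq0 !pnatr_eq0 !eqn0Ngt w_gt0 S_gt0 /=.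
  by rewrite log2_div ?ltr0n // mulrBr mulrAC.
rewrite sumrB -!mulr_suml -natr_sum sum_w divff ?mul1r ?opprB //.
by rewrite pnatr_eq0 -lt0n.
Qed.

Lemma H_in_nat_weights q n m (ch : n.-tuple 'I_q -> m.-tuple 'I_q -> R)
    (y : m.-tuple 'I_q) (w : n.-tuple 'I_q -> nat) (c : R) (S : nat) :
  c != 0 -> (forall x, ch x y = (w x)%:R / c) ->
  (\sum_x w x)%N = S -> (0 < S)%N ->
  H_in ch y = log2 S%:R - (\sum_x (w x)%:R * log2 (w x)%:R) / S%:R.
Proof.
move=> c_neq0 ch_w sum_w S_gt0; rewrite /H_in -(entropy_bits_nat S_gt0 sum_w).
apply: eq_entropy_bits => x; rewrite /posterior ch_w.
by rewrite (eq_bigr _ (fun x' _ => ch_w x')) -mulr_suml -natr_sum sum_w invf_div mulrA divfK.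
Qed.

Lemma H_in_ins_runs q n (y : n.+1.-tuple 'I_q) :
  @H_in_ins R q n y = log2 n.+1%:R
    - (\sum_(1 <= r < n.+2) (nruns r y)%:R * r%:R * log2 r%:R) / n.+1%:R :> R.
Proof.
have q_gt0 : (0 < q)%N := leq_ltn_trans (leq0n _) (ltn_ord (tnth y ord0)).
rewrite /H_in_ins (H_in_nat_weights (w := fun x => omega x y) (c := n.+1%:R * q%:R)
  (S := n.+1)) //.
- by rewrite (sum_omega_runs y (fun k => log2 k%:R)).
- by rewrite mulf_neq0 // pnatr_eq0 -lt0n.
- exact: sum_omega_input.
Qed.

Lemma H_in_del_omega q n (y : n.-tuple 'I_q) : (0 < q)%N ->
  @H_in_del R q n.+1 y = log2 (n.+1%:R * q%:R)
    - (\sum_(x : n.+1.-tuple 'I_q) (omega y x)%:R * log2 (omega y x)%:R)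
      / (n.+1%:R * q%:R).
Proof.
move=> q_gt0; rewrite -natrM.
apply: (H_in_nat_weights (w := omega y) (c := n.+1%:R)); rewrite ?pnatr_eq0 //.
  exact: sum_omega_output.
by rewrite muln_gt0.
Qed.

Lemma unif_exp_affine q m (F G : m.-tuple 'I_q -> R) (c d : R) : (0 < q)%N ->
  (forall y, F y = c - G y / d) ->
  unif_exp F = c - (\sum_y G y) / (d * (q ^ m)%:R).
Proof.
move=> q_gt0 FG; have qm_neq0 : (q ^ m)%:R != 0 :> R.
  by rewrite pnatr_eq0 -lt0n expn_gt0 q_gt0.
rewrite /unif_exp (eq_bigr _ (fun y _ => FG y)) sumrB sumr_const card_tuple card_ord.
by rewrite -mulr_suml mulrBl -[c *+ _]mulr_natr mulfK // invfM mulrA.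
Qed.

End Entropy.

Section Expectations.
Local Open Scope ring_scope.
Variable R : realType.

Lemma unif_exp_H_in_ins q n : (0 < q)%N ->
  unif_exp (fun y : n.+1.-tuple 'I_q => @H_in_ins R q n y)
    = log2 n.+1%:R
      - (\sum_(1 <= r < n.+2) (Nruns n.+1 r q)%:R * r%:R * log2 r%:R)
        / (n.+1%:R * (q ^ n.+1)%:R).
Proof.
move=> q_gt0; rewrite (unif_exp_affine q_gt0 (@H_in_ins_runs R q n)).
by rewrite sum_nruns_Nruns.
Qed.

Lemma sum_Nruns_succ q m : (0 < q)%N ->
  \sum_(1 <= r < m.+2) (Nruns m.+1 r q)%:R * r%:R * log2 r%:R
  = \sum_(1 <= r < m.+1) (Nruns m r q)%:R * r.+1%:R * log2 r.+1%:R :> R.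
Proof.
move=> q_gt0; rewrite big_ltn // log2_1 mulr0 add0r big_add1 /=.
by apply: eq_big_nat => r /andP[r_gt0 _]; rewrite Nruns_succ.
Qed.

Lemma unif_exp_H_in_del q m : (0 < q)%N ->
  unif_exp (fun y : m.-tuple 'I_q => @H_in_del R q m.+1 y)
    = log2 (m.+1%:R * q%:R)
      - (\sum_(1 <= r < m.+1) (Nruns m r q)%:R * r.+1%:R * log2 r.+1%:R)
        / (m.+1%:R * (q ^ m.+1)%:R).
Proof.
move=> q_gt0; rewrite (unif_exp_affine q_gt0 (fun y => @H_in_del_omega R q m y q_gt0)).
rewrite exchange_big /=.
under eq_bigr do rewrite (sum_omega_runs _ (fun k => log2 k%:R)).
by rewrite sum_nruns_Nruns sum_Nruns_succ // expnS natrM mulrA.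
Qed.

End Expectations.

Unset Implicit Arguments.
Local Open Scope ring_scope.

Theorem lemma12 (R : realType) (n q : nat) (hn : (1 <= n)%N) (hq : (2 <= q)%N) :
  unif_exp (fun y : n.-1.-tuple 'I_q => @H_in_del R q n y)
    = log2 (n%:R * q%:R)
      - (\sum_(1 <= r < n) (Nruns n.-1 r q)%:R * r.+1%:R * log2 r.+1%:R)
        / (n%:R * (q ^ n)%:R)
  /\
  unif_exp (fun y : n.+1.-tuple 'I_q => @H_in_ins R q n y)
    = log2 n.+1%:R
      - (\sum_(1 <= r < n.+2) (Nruns n.+1 r q)%:R * r%:R * log2 r%:R)
        / (n.+1%:R * (q ^ n.+1)%:R).
Proof.
have q_gt0 : (0 < q)%N by apply: ltnW.
split; last exact: unif_exp_H_in_ins.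
by case: n hn => // m _; apply: unif_exp_H_in_del.
Qed.
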